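(* Let $d \geq 3$ and $1 \leq r < \frac d2$ be integers and let $f_{d,r}(x) = f_{d,r}(x;q) := \sum_{\lambda} x^{\ell(\lambda)} q^{|\lambda|}$, where the sum runs over all partitions $\lambda$ (including the empty partition) such that every part is congruent to $0, \pm r \pmod d$, consecutive parts satisfy $\lambda_i - \lambda_{i+1} \geq d$, and $\lambda_i - \lambda_{i+1} > d$ whenever $d \mid \lambda_i$; here $\ell(\lambda)$ is the number of parts and $|\lambda|$ the sum of the parts. Then, as formal power series in $x$ and $q$, \[ f_{d,r}(x) = \left(1 + xq^r + xq^{d-r}\right) f_{d,r}\left(xq^d\right) + xq^d\left(1 - xq^d\right) f_{d,r}\left(xq^{2d}\right). \] *)

(* Bivariate formal power series in x and q with integer
   coefficients, represented by their coefficient functions: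
   F m n = coefficient of x^m q^n. *)
From mathcomp Require Import all_boot all_order all_algebra.
Set Implicit Arguments. Unset Strict Implicit. Unset Printing Implicit Defensive.
Import Order.TTheory GRing.Theory Num.Theory.
Local Open Scope ring_scope.

Definition fps2 := nat -> nat -> int.

Definition fps2_add (F G : fps2) : fps2 := fun m n => F m n + G m n.
Definition fps2_opp (F : fps2) : fps2 := fun m n => - F m n.
Definition fps2_mul (F G : fps2) : fps2 := fun m n =>
  \sum_(i < m.+1) \sum_(j < n.+1) F i j * G (m - i)%N (n - j)%N.
Definition fps2_mon (a b : nat) : fps2 := fun m n => ((m == a) && (n == b))%:R.
Definition fps2_subst_xq (k : nat) (F : fps2) : fps2 := fun m n =>
  if (k * m <= n)%N then F m (n - k * m)%N else 0.

Definition part_ok (d r p : nat) : bool :=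
  (0 < p)%N && [|| (p %% d == 0)%N, (p %% d == r %% d)%N | ((p + r) %% d == 0)%N].
Definition gap_ok (d : nat) (a b : nat) : bool :=
  (b + d <= a)%N && ((d %| a)%N ==> (b + d < a)%N).
Definition admissible (d r : nat) (s : seq nat) : bool :=
  all (part_ok d r) s && sorted (gap_ok d) s.

(* Such a partition has all parts <= n, so they are exactly
   the m-tuples with entries in 'I_(n+1) satisfying the conditions. *)
Definition fdr (d r : nat) : fps2 := fun m n =>
  (#|[set t : m.-tuple 'I_n.+1 |
       admissible d r (map val t) && (sumn (map val t) == n)%N]|)%:R.

(* Sort the parts increasingly and classify admissible partitions by their
   smallest part.  Removing a common multiple c of d from every part of a
   partition whose parts all exceed c yields an arbitrary admissible partition,
   which is the substitution x -> x q^c.  The admissible parts below 2d + r are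
   r, d - r, d, d + r, 2d - r and 2d; the smallest part is r, d - r or d (then
   the next part is > d, >= 2d - r, > 2d respectively), or exceeds d.  A
   partition with all parts > d either starts with d + r, followed by parts
   > 2d, or has all parts >= 2d - r; eliminating this last class between the
   two decompositions gives the recurrence. *)

From mathcomp Require Import all_boot all_order all_algebra zify.
From Stdlib Require Import FunctionalExtensionality.
Set Implicit Arguments. Unset Strict Implicit. Unset Printing Implicit Defensive.

(* Entries of a sequence summing to n are at most n, so tuples over 'I_n.+1
   cover all such sequences. *)
Definition nseqs (P : pred (seq nat)) (m n : nat) : nat :=
  #|[set t : m.-tuple 'I_n.+1 | P (map val t) && (sumn (map val t) == n)]|.

Definition enum_seqs (P : pred (seq nat)) (m n : nat) : seq (seq nat) :=
  [seq map val t | t : m.-tuple 'I_n.+1 <- enum [set t : m.-tuple 'I_n.+1 |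
                              P (map val t) && (sumn (map val t) == n)]].

Lemma size_enum_seqs P m n : size (enum_seqs P m n) = nseqs P m n.
Proof. by rewrite size_map /nseqs cardE. Qed.

Lemma enum_seqs_uniq P m n : uniq (enum_seqs P m n).
Proof.
rewrite map_inj_uniq ?enum_uniq // => t1 t2 /(inj_map val_inj) t12.
exact: val_inj.
Qed.

Lemma mem_leq_sumn (s : seq nat) x : x \in s -> x <= sumn s.
Proof.
elim: s => //= y s IHs; rewrite in_cons => /predU1P [-> | /IHs]; first exact: leq_addr.
by move/leq_trans; apply; exact: leq_addl.
Qed.

Lemma mem_enum_seqs P m n s :
  (s \in enum_seqs P m n) = [&& size s == m, P s & sumn s == n].
Proof.
apply/mapP/and3P => [[t] | [/eqP s_m Ps /eqP s_n]].
  by rewrite mem_enum inE => /andP [Pt t_n] ->; rewrite size_map size_tuple.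
have s_ord : size (map (@inord n) s) == m by rewrite size_map s_m.
have valK : map val (Tuple s_ord) = s.
  rewrite /= -map_comp -[RHS]map_id; apply/eq_in_map => x sx /=.
  by rewrite inordK // ltnS -s_n mem_leq_sumn.
by exists (Tuple s_ord); rewrite // mem_enum inE valK Ps s_n eqxx.
Qed.

Lemma nseqs_leq (P Q : pred (seq nat)) m1 n1 m2 n2 (f g : seq nat -> seq nat) :
  (forall s, size s = m1 -> sumn s = n1 -> P s ->
     [/\ size (f s) = m2, sumn (f s) = n2, Q (f s) & g (f s) = s]) ->
  nseqs P m1 n1 <= nseqs Q m2 n2.
Proof.
move=> fPQ; rewrite -!size_enum_seqs -(size_map f).
have {}fPQ s : s \in enum_seqs P m1 n1 ->
    [/\ f s \in enum_seqs Q m2 n2 & g (f s) = s].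
  rewrite !mem_enum_seqs => /and3P [/eqP s_m Ps /eqP s_n].
  by have [-> -> Qfs fK] := fPQ s s_m s_n Ps; rewrite Qfs !eqxx.
apply: uniq_leq_size => [|_ /mapP [s /fPQ [fs_Q _] ->] //].
rewrite map_inj_in_uniq ?enum_seqs_uniq // => s1 s2 /fPQ [_ fK1] /fPQ [_ fK2].
by rewrite -{2}fK1 -{2}fK2 => ->.
Qed.

Lemma nseqs_bij (P Q : pred (seq nat)) m1 n1 m2 n2 (f g : seq nat -> seq nat) :
  (forall s, size s = m1 -> sumn s = n1 -> P s ->
     [/\ size (f s) = m2, sumn (f s) = n2, Q (f s) & g (f s) = s]) ->
  (forall s, size s = m2 -> sumn s = n2 -> Q s ->
     [/\ size (g s) = m1, sumn (g s) = n1, P (g s) & f (g s) = s]) ->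
  nseqs P m1 n1 = nseqs Q m2 n2.
Proof. by move=> fPQ gQP; apply/eqP; rewrite eqn_leq (nseqs_leq fPQ) (nseqs_leq gQP). Qed.

Lemma eq_nseqs (P Q : pred (seq nat)) m n :
  (forall s, size s = m -> sumn s = n -> P s = Q s) -> nseqs P m n = nseqs Q m n.
Proof.
by move=> PQ; apply: (@nseqs_bij _ _ _ _ _ _ id id) => s s_m s_n;
  rewrite ?PQ // -?PQ.
Qed.

Lemma nseqs_eq0 (P : pred (seq nat)) m n :
  (forall s, size s = m -> sumn s = n -> ~~ P s) -> nseqs P m n = 0.
Proof.
move=> nP; rewrite (@eq_nseqs P pred0) => [|s s_m s_n]; last exact/negbTE/nP.
by apply/eqP; rewrite cards_eq0; apply/eqP/setP => t; rewrite !inE.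
Qed.

Lemma nseqsID (P Q : pred (seq nat)) m n :
  nseqs P m n = nseqs [pred s | P s && Q s] m n + nseqs [pred s | P s && ~~ Q s] m n.
Proof.
rewrite /nseqs -(cardsID [set t : m.-tuple 'I_n.+1 | Q (map val t)]).
by congr (_ + _); apply: eq_card => t; rewrite !inE;
  case: (P _); case: (Q _); case: (_ == n).
Qed.

Section AdmissiblePartitions.
Variables d r : nat.

(* gap_ok tests divisibility of the larger part, min_next that of the smaller
   one; this only matters for a gap of exactly d, and then both parts are
   divisible by d together. *)
Definition min_next (p : nat) : nat := p + d + (d %| p).

Definition asc_admissible (s : seq nat) : bool :=
  all (part_ok d r) s && sorted (fun a b => min_next a <= b) s.

Definition nadm_ge (L m n : nat) : nat :=
  nseqs [pred s | asc_admissible s && all (leq L) s] m n.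

Lemma gap_okE a b : gap_ok d b a = (min_next a <= b).
Proof.
rewrite /gap_ok /min_next; case: (ltngtP (a + d) b) => [||<-];
  rewrite ?dvdn_addl ?dvdnn //; case: (d %| _) => /=; lia.
Qed.

Lemma min_next_ndvd p : ~~ (d %| p) -> min_next p = p + d.
Proof. by rewrite /min_next => /negbTE ->; rewrite addn0. Qed.

Lemma min_next_dvd p : d %| p -> min_next p = (p + d).+1.
Proof. by rewrite /min_next => ->; rewrite addn1. Qed.

Lemma admissible_rev s : admissible d r (rev s) = asc_admissible s.
Proof.
rewrite /admissible all_rev rev_sorted; congr (_ && _).
by case: s => //= x s; apply: eq_path => a b; exact: gap_okE.
Qed.

Lemma fdr_nadm_ge m n : fdr d r m n = (nadm_ge 0 m n)%:R%R.
Proof.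
congr (_ %:R)%R; apply: (@nseqs_bij _ _ _ _ _ _ rev rev) => s s_m s_n /=;
  rewrite ?size_rev ?sumn_rev ?revK.
- by rewrite -admissible_rev revK => ->; split=> //; apply/allP.
- by rewrite admissible_rev => /andP [].
Qed.

Lemma asc_admissible_cons p t :
  asc_admissible (p :: t) =
  [&& part_ok d r p, asc_admissible t & min_next p <= head (min_next p) t].
Proof.
rewrite /asc_admissible /= -!andbA; congr (_ && _).
case: t => [|y t] /=; rewrite ?leqnn ?andbT //.
by do 2 congr (_ && _); rewrite andbC.
Qed.

Lemma asc_admissible_pos s : asc_admissible s -> all (leq 1) s.
Proof. by case/andP => + _; apply: sub_all => x /andP []. Qed.

Lemma asc_admissible_all_geq L s :
  asc_admissible s -> all (leq L) s = (L <= head L s).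
Proof.
case: s => [|x t] /andP [_ /= x_t]; first by rewrite leqnn.
have /(order_path_min leq_trans) x_le_t : path leq x t.
  by apply: sub_path x_t => a b; apply: leq_trans; rewrite /min_next -addnA leq_addr.
case: (leqP L x) => //= L_x; apply: sub_all x_le_t => y; exact: leq_trans.
Qed.

Lemma min_next_addMn k a : min_next (a + k * d) = min_next a + k * d.
Proof. by rewrite /min_next dvdn_addl ?dvdn_mull //; lia. Qed.

Lemma part_ok_addMn k p : 0 < p -> part_ok d r (p + k * d) = part_ok d r p.
Proof.
move=> p_gt0; rewrite /part_ok addnAC !(addnC _ (k * d)) !modnMDl p_gt0.
by rewrite ltn_addl.
Qed.

Lemma asc_admissible_addn c s : d %| c -> all (leq 1) s ->
  asc_admissible (map (addn^~ c) s) = asc_admissible s.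
Proof.
case/dvdnP=> k ->{c} s_pos; rewrite /asc_admissible all_map sorted_map.
congr (_ && _); first by apply: eq_in_all => x /(allP s_pos) x_pos /=; rewrite part_ok_addMn.
by case: s {s_pos} => //= x t; apply: eq_path => a b /=; rewrite min_next_addMn leq_add2r.
Qed.

Lemma sumn_map_addn c s : sumn (map (addn^~ c) s) = sumn s + c * size s.
Proof. by elim: s => [|x s IHs] /=; lia. Qed.

Lemma sumn_all_geq L s : all (leq L) s -> L * size s <= sumn s.
Proof. by elim: s => [|x s IHs] /= => [|/andP [L_x /IHs]]; lia. Qed.

Lemma nadm_ge_shift c m n : d %| c ->
  nadm_ge c.+1 m n = if c * m <= n then nadm_ge 0 m (n - c * m) else 0.
Proof.
move=> d_c; case: ifP => [cm_n | /negbT]; last first.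
  rewrite -ltnNge => n_cm; apply: nseqs_eq0 => s s_m s_n.
  apply/andP => -[_ /sumn_all_geq]; rewrite s_m s_n; lia.
apply: (@nseqs_bij _ _ _ _ _ _ (map (subn^~ c)) (map (addn^~ c))).
- move=> s s_m s_n /andP [adm_s c_s] /=.
  have subnK_s : map (addn^~ c) (map (subn^~ c) s) = s.
    rewrite -map_comp -[RHS]map_id; apply/eq_in_map => x /(allP c_s) /= c_x.
    by rewrite subnK // ltnW.
  have pos : all (leq 1) (map (subn^~ c) s).
    by rewrite all_map; apply: sub_all c_s => x /=; lia.
  have := sumn_map_addn c (map (subn^~ c) s); rewrite subnK_s size_map s_m => sum_s.
  rewrite -(asc_admissible_addn d_c pos) subnK_s adm_s; split=> //; [lia | exact/allP].
- move=> t t_m t_n /andP [adm_t _] /=; have pos := asc_admissible_pos adm_t.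
  have := sumn_map_addn c t; rewrite t_m => sum_t.
  rewrite size_map asc_admissible_addn // adm_t all_map.
  split; [done | lia | | ].
    by apply: sub_all pos => x /=; lia.
  by rewrite -map_comp -[RHS]map_id; apply/eq_in_map => x _ /=; rewrite addnK.
Qed.

Lemma nadm_ge_nil L L' n : nadm_ge L 0 n = nadm_ge L' 0 n.
Proof. by apply: eq_nseqs => -[]. Qed.

Lemma nadm_ge_skip L L' m n : L <= L' ->
  (forall p, L <= p < L' -> ~~ part_ok d r p) -> nadm_ge L m n = nadm_ge L' m n.
Proof.
move=> L_L' gap; apply: eq_nseqs => s _ _ /=.
case adm_s: (asc_admissible s) => //=; apply: eq_in_all => p s_p /=.
have ok_p : part_ok d r p by move: adm_s => /andP [/allP ->].
case: (leqP L' p) => [L'_p | p_L']; first by rewrite (leq_trans L_L').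
by apply/negbTE/negP => L_p; have := gap p; rewrite L_p p_L' ok_p => /(_ isT).
Qed.

Lemma nadm_ge_peel p m n : part_ok d r p ->
  nadm_ge p m.+1 n =
  (if p <= n then nadm_ge (min_next p) m (n - p) else 0) + nadm_ge p.+1 m.+1 n.
Proof.
move=> ok_p; rewrite /nadm_ge (nseqsID _ (fun s => head 0 s == p)); congr (_ + _).
  case: ifP => [p_n | /negbT]; last first.
    rewrite -ltnNge => n_p; apply: nseqs_eq0 => -[//|x t] _ /= s_n.
    apply/andP => -[_ /eqP x_p]; lia.
  apply: (@nseqs_bij _ _ _ _ _ _ behead (cons p)).
  - move=> [//|x t] [t_m] /= s_n /andP [/andP [adm_s _] /eqP x_p]; subst x.
    move: adm_s; rewrite asc_admissible_cons => /and3P [_ adm_t p_t].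
    by rewrite adm_t (asc_admissible_all_geq _ adm_t) p_t; split=> //; lia.
  - move=> t t_m t_n /andP [adm_t t_ge] /=.
    have adm_pt : asc_admissible (p :: t).
      by rewrite asc_admissible_cons ok_p adm_t -asc_admissible_all_geq.
    have := asc_admissible_all_geq p adm_pt; rewrite /= leqnn /= => ->.
    by rewrite adm_pt eqxx; split=> //; lia.
apply: eq_nseqs => -[//|x t] _ _ /=.
case adm_s: (asc_admissible (x :: t)) => //=.
have := asc_admissible_all_geq p adm_s; have := asc_admissible_all_geq p.+1 adm_s.
by rewrite /= => -> ->; lia.
Qed.

End AdmissiblePartitions.

Section Fps2Algebra.
Import GRing.Theory.
Local Open Scope ring_scope.

Definition fps2_shift (a b : nat) (G : fps2) : fps2 := fun m n =>
  if (a <= m)%N && (b <= n)%N then G (m - a)%N (n - b)%N else 0.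

Lemma sumr_ord_eq (V : nmodType) (F : nat -> V) a k :
  \sum_(i < k) (if (i : nat) == a then F i else 0) = if (a < k)%N then F a else 0.
Proof. by rewrite -big_mkcond big_ord1_eq. Qed.

Lemma fps2_mul_monl a b G : fps2_mul (fps2_mon a b) G = fps2_shift a b G.
Proof.
apply: functional_extensionality => m; apply: functional_extensionality => n.
rewrite /fps2_mul /fps2_mon /fps2_shift.
transitivity (\sum_(i < m.+1) if (i : nat) == a then
   \sum_(j < n.+1) (if (j : nat) == b then G (m - i)%N (n - j)%N else 0) else 0).
  apply: eq_bigr => i _; case: eqP => _ /=.
    by apply: eq_bigr => j _; case: eqP => _ /=; rewrite ?mul1r ?mul0r.
  by rewrite big1 // => j _; rewrite mul0r.
rewrite (sumr_ord_eq (fun i =>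
  \sum_(j < n.+1) (if (j : nat) == b then G (m - i)%N (n - j)%N else 0))).
by rewrite (sumr_ord_eq (fun j => G (m - a)%N (n - j)%N)) !ltnS; case: (a <= m)%N.
Qed.

Lemma fps2_shift0 G : fps2_shift 0 0 G = G.
Proof.
apply: functional_extensionality => m; apply: functional_extensionality => n.
by rewrite /fps2_shift !subn0.
Qed.

Lemma fps2_mulDl F G H :
  fps2_mul (fps2_add F G) H = fps2_add (fps2_mul F H) (fps2_mul G H).
Proof.
apply: functional_extensionality => m; apply: functional_extensionality => n.
rewrite /fps2_mul /fps2_add -big_split; apply: eq_bigr => i _.
by rewrite -big_split; apply: eq_bigr => j _; exact: mulrDl.
Qed.

Lemma fps2_mulNl F H : fps2_mul (fps2_opp F) H = fps2_opp (fps2_mul F H).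
Proof.
apply: functional_extensionality => m; apply: functional_extensionality => n.
rewrite /fps2_mul /fps2_opp -sumrN; apply: eq_bigr => i _.
by rewrite -sumrN; apply: eq_bigr => j _; exact: mulNr.
Qed.

Lemma fps2_shiftD a b F G :
  fps2_shift a b (fps2_add F G) = fps2_add (fps2_shift a b F) (fps2_shift a b G).
Proof.
apply: functional_extensionality => m; apply: functional_extensionality => n.
by rewrite /fps2_shift /fps2_add; case: ifP; rewrite ?addr0.
Qed.

Lemma fps2_shiftN a b F : fps2_shift a b (fps2_opp F) = fps2_opp (fps2_shift a b F).
Proof.
apply: functional_extensionality => m; apply: functional_extensionality => n.
by rewrite /fps2_shift /fps2_opp; case: ifP; rewrite ?oppr0.
Qed.

Lemma fps2_shift_shift a b c e G :
  fps2_shift a b (fps2_shift c e G) = fps2_shift (a + c) (b + e) G.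
Proof.
apply: functional_extensionality => m; apply: functional_extensionality => n.
rewrite /fps2_shift; case: ifP => [/andP [a_m b_n] | ab_mn].
  have -> : ((c <= m - a) && (e <= n - b))%N = ((a + c <= m) && (b + e <= n))%N by lia.
  by rewrite !subnDA.
by rewrite ifF //; lia.
Qed.

Lemma fps2_shift_mon a b c e : fps2_shift a b (fps2_mon c e) = fps2_mon (a + c) (b + e).
Proof.
apply: functional_extensionality => m; apply: functional_extensionality => n.
rewrite /fps2_shift /fps2_mon; case: ifP => [/andP [a_m b_n] | ab_mn].
  by congr (_ %:R); lia.
by have -> : ((m == a + c) && (n == b + e))%N = false by lia.
Qed.

End Fps2Algebra.

Section GeneratingFunctions.
Variables d r : nat.
Import GRing.Theory.

Definition adm_gf (L : nat) : fps2 := fun m n => (nadm_ge d r L m n)%:R%R.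

Lemma fdr_adm_gf : fdr d r = adm_gf 0.
Proof.
apply: functional_extensionality => m; apply: functional_extensionality => n.
exact: fdr_nadm_ge.
Qed.

Lemma fps2_subst_xq_fdr c : d %| c -> fps2_subst_xq c (fdr d r) = adm_gf c.+1.
Proof.
move=> d_c; apply: functional_extensionality => m; apply: functional_extensionality => n.
by rewrite /fps2_subst_xq /adm_gf nadm_ge_shift //; case: ifP => // _; rewrite fdr_nadm_ge.
Qed.

Lemma adm_gf_skip L L' : L <= L' -> (forall p, L <= p < L' -> ~~ part_ok d r p) ->
  adm_gf L = adm_gf L'.
Proof.
move=> L_L' gap; apply: functional_extensionality => m; apply: functional_extensionality => n.
by rewrite /adm_gf (nadm_ge_skip _ _ L_L' gap).
Qed.

Lemma adm_gf_peel p : part_ok d r p ->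
  adm_gf p = fps2_add (fps2_shift 1 p (adm_gf (min_next d p))) (adm_gf p.+1).
Proof.
move=> ok_p; apply: functional_extensionality => m; apply: functional_extensionality => n.
rewrite /adm_gf /fps2_add /fps2_shift; case: m => [|m] /=.
  by rewrite (nadm_ge_nil _ _ p p.+1) add0r.
by rewrite nadm_ge_peel // subn1 /=; case: ifP; rewrite natrD ?add0r.
Qed.

End GeneratingFunctions.

Section Recurrence.
Variables d r : nat.
Hypotheses (r_gt0 : 0 < r) (r_lt : 2 * r < d).

Let small_parts := [:: r; d - r; d; d + r; 2 * d - r; 2 * d].

Lemma part_ok_lt p : p < 2 * d + r ->
  part_ok d r p = (p \in small_parts).
Proof.
have d_gt0 : 0 < d by lia.
move=> p_lt; rewrite /part_ok /small_parts (@modn_small r) ?inE; last by lia.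
have := divn_eq p d; have := ltn_pmod p d_gt0.
have := divn_eq (p + r) d; have := ltn_pmod (p + r) d_gt0.
have : p %/ d < 3 by rewrite ltn_divLR //; lia.
have : (p + r) %/ d < 4 by rewrite ltn_divLR //; lia.
move: (p %/ d) (p %% d) ((p + r) %/ d) ((p + r) %% d) => k s j t.
by case: j => [|[|[|[|]]]] //; case: k => [|[|[|]]] //; lia.
Qed.

Lemma part_ok_mem p : p \in small_parts -> part_ok d r p.
Proof. by move=> p_in; rewrite part_ok_lt //; move: p_in; rewrite /small_parts !inE; lia. Qed.

Lemma adm_gf_skip_lt L L' : L <= L' <= 2 * d + r ->
  (forall p, L <= p < L' -> p \notin small_parts) -> adm_gf d r L = adm_gf d r L'.
Proof.
move=> /andP [L_L' L'_le] gap; apply: adm_gf_skip => // p /andP [L_p p_L'].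
by rewrite part_ok_lt ?gap ?L_p //; lia.
Qed.

Lemma adm_gf0E :
  adm_gf d r 0 = fps2_add (fps2_shift 1 r (adm_gf d r d.+1))
    (fps2_add (fps2_shift 1 (d - r) (adm_gf d r (2 * d - r)))
      (fps2_add (fps2_shift 1 d (adm_gf d r (2 * d).+1)) (adm_gf d r d.+1))).
Proof.
have ok_r : part_ok d r r by apply: part_ok_mem; rewrite !inE eqxx.
have ok_dr : part_ok d r (d - r) by apply: part_ok_mem; rewrite !inE eqxx !orbT.
have ok_d : part_ok d r d by apply: part_ok_mem; rewrite !inE eqxx !orbT.
rewrite (@adm_gf_skip_lt 0 r) ?(adm_gf_peel ok_r) ?min_next_ndvd ?gtnNdvd.
rewrite -(@adm_gf_skip_lt d.+1 (r + d)).
rewrite (@adm_gf_skip_lt r.+1 (d - r)) ?(adm_gf_peel ok_dr) ?min_next_ndvd ?gtnNdvd.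
rewrite (@adm_gf_skip_lt (d - r).+1 d) ?(adm_gf_peel ok_d) ?min_next_dvd ?dvdnn.
- have -> : d - r + d = 2 * d - r by lia.
  by rewrite addnn -mul2n.
all: try lia.
all: by move=> p; rewrite !inE; lia.
Qed.

Lemma adm_gf_dSE :
  adm_gf d r d.+1 =
  fps2_add (fps2_shift 1 (d + r) (adm_gf d r (2 * d).+1)) (adm_gf d r (2 * d - r)).
Proof.
have ok_dr : part_ok d r (d + r) by apply: part_ok_mem; rewrite !inE eqxx !orbT.
rewrite (@adm_gf_skip_lt d.+1 (d + r)) ?(adm_gf_peel ok_dr) ?min_next_ndvd.
rewrite -(@adm_gf_skip_lt (2 * d).+1 (d + r + d)).
rewrite (@adm_gf_skip_lt (d + r).+1 (2 * d - r)) //.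
all: try lia.
all: try by move=> p; rewrite !inE; lia.
by rewrite dvdn_addr // gtnNdvd; lia.
Qed.

End Recurrence.

Theorem proposition2p1 (d r : nat) (hd : (3 <= d)%N) (hr : (1 <= r)%N)
  (hrd : (2 * r < d)%N) :
  fdr d r =
  fps2_add
    (fps2_mul
       (fps2_add (fps2_mon 0 0) (fps2_add (fps2_mon 1 r) (fps2_mon 1 (d - r))))
       (fps2_subst_xq d (fdr d r)))
    (fps2_mul
       (fps2_mul (fps2_mon 1 d) (fps2_add (fps2_mon 0 0) (fps2_opp (fps2_mon 1 d))))
       (fps2_subst_xq (2 * d) (fdr d r))).
Proof.
(* hd is implied by hr and hrd. *)
rewrite (fps2_subst_xq_fdr _ (dvdnn d)) (fps2_subst_xq_fdr _ (dvdn_mull 2 (dvdnn d))).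
rewrite fdr_adm_gf adm_gf0E //.
rewrite !fps2_mulDl !fps2_mul_monl fps2_shiftD fps2_shiftN !fps2_shift_mon.
rewrite fps2_mulDl fps2_mulNl !fps2_mul_monl fps2_shift0 !addn0.
have := congr1 (fps2_shift 1 (d - r)) (adm_gf_dSE hr hrd).
rewrite fps2_shiftD fps2_shift_shift (_ : (d - r + (d + r) = d + d)%N); last by lia.
move=> shifted_dS; apply: functional_extensionality => m.
apply: functional_extensionality => n; move: (congr1 (fun F => F m n) shifted_dS).
rewrite /fps2_add /fps2_opp; lia.
Qed.
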